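(* Let $\Gamma(V,d,c)$ be a coherent cost-geometry with $|V|=n$, positive scale costs $c_k$, and coherence constants $\gamma,\alpha$ as below, and let $\theta>0$. Define $$\lambda_\theta=\min_{k_\theta\le k\le K}\left[\frac{\log p_k}{c_k}\left(1+\frac{\theta\log\log n}{\log p_k}\right)\right],\qquad B^+_\theta=\max\{B_0,g(\lambda_\theta)\}.$$ Then for every $B\ge B^+_\theta$, the product measure $G(n,\mathbf{Q}^*(B))$ is $\theta$-uniformly rich for $(V,d)$.
   Context: Geometry $(V,d)$: finite $V$, $|V|=n$, $d$ symmetric, nonnegative, $d(x,y)=0$ iff $x=y$. For $\gamma>1$, $K=\lceil\log_\gamma n\rceil$, $P_k(v)=\#\{u: d(v,u)\in(\gamma^{k-1},\gamma^k]\}$; $(V,d)$ is $\gamma$-coherent if (H1) there are $A>1,\alpha>0$ with $\alpha\gamma^k\le P_k(v)\le A\gamma^k$ for all $v$, $k\in[K]$, and (H2) there are $\phi>0$, $0<\lambda<1$ with $|\{u: d(v,u)\le\gamma^{k_{vt}},\ d(u,t)\le\lambda d(v,t)\}|\ge\phi\gamma^{k_{vt}}$ for all $v\ne t$, where $d(v,t)\in(\gamma^{k_{vt}-1},\gamma^{k_{vt}}]$. A coherent cost-geometry additionally has a cost $c_k>0$ assigned to every pair at distance in $(\gamma^{k-1},\gamma^k]$. Notation: $P_k=\frac12\sum_vP_k(v)$, $p_k=P_k/n$; $g(\lambda)=\sum_{k=1}^Kc_kp_k/(1+e^{\lambda c_k})$ for $\lambda\ge0$; $\bar B=g(0)$;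 $\lambda(B)=g^{-1}(B)$ for $0<B\le\bar B$ and $\lambda(B)=0$ for $B\ge\bar B$; $\mathbf{Q}^*(B)$ has entry $1/(1+\exp(\lambda(B)c_k))$ for every pair of scale $k$. $\lambda_0=\min_{k\in[K]}\frac{1}{c_k}\log\!\left(\frac{n\log p_k}{5K\log^2n}\right)$ and $B_0=g(\lambda_0)$. $k_\theta=\frac{\theta\log\log n-\log\alpha}{\log\gamma}$. $\theta$-uniform richness: $G(n,\mathbf{Q})$ (each pair $\{i,j\}$ present independently with probability $Q_{ij}$) is $\theta$-uniformly rich for $(V,d)$ if there is a constant $M>0$ (independent of $n$) such that for every $k\ge k_\theta$ and every pair $\{i,j\}$ with $d(i,j)\in(\gamma^{k-1},\gamma^k]$, $Q_{ij}\ge\frac{1}{M\log^\theta(n)\,\gamma^k}$. *)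

From HB Require Import structures.
From mathcomp Require Import all_boot all_order all_algebra.
From mathcomp Require Import classical_sets boolp reals sequences exp.
Set Implicit Arguments. Unset Strict Implicit. Unset Printing Implicit Defensive.
Import Order.TTheory GRing.Theory Num.Theory.
Local Open Scope classical_set_scope.
Local Open Scope ring_scope.

Section CostGeometry.
Variable R : realType.

Definition in_scale (gam : R) (k : nat) (r : R) : bool :=
  (gam ^+ k.-1 < r) && (r <= gam ^+ k).

Definition scale_of (gam r : R) : nat := `|Num.ceil (ln r / ln gam)|%N.

Definition Kof (gam : R) (n : nat) : nat := `|Num.ceil (ln (n%:R : R) / ln gam)|%N.

Variables (V : finType) (d : V -> V -> R) (gam : R) (c : nat -> R).

Definition nV : nat := #|V|.
Definition KV : nat := Kof gam nV.

Definition Pkv (k : nat) (v : V) : nat := #|[set u | in_scale gam k (d v u)]|.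
Definition Pk (k : nat) : R := (\sum_(v : V) (Pkv k v)%:R) / 2.
Definition pk (k : nat) : R := Pk k / (nV%:R).

Definition gfun (lam : R) : R :=
  \sum_(1 <= k < KV.+1) c k * pk k / (1 + expR (lam * c k)).
Definition Bbar : R := gfun 0.
Definition lambdaB (B : R) : R :=
  if Bbar <= B then 0 else xget 0 [set l : R | 0 <= l /\ gfun l = B].

Definition Qstar (B : R) (i j : V) : R :=
  1 / (1 + expR (lambdaB B * c (scale_of gam (d i j)))).

Definition minover (P : nat -> Prop) (f : nat -> R) : R := inf (f @` [set k | P k]).

Definition lambda0 : R :=
  minover (fun k => (1 <= k <= KV)%N)
    (fun k => (c k)^-1 * ln (nV%:R * ln (pk k) /
                    (5 * KV%:R * (ln (nV%:R : R)) ^+ 2))).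
Definition B0 : R := gfun lambda0.

Definition k_theta (theta alpha : R) : R :=
  (theta * ln (ln (nV%:R : R)) - ln alpha) / ln gam.

Definition lambda_theta (theta alpha : R) : R :=
  minover (fun k => (1 <= k <= KV)%N /\ k_theta theta alpha <= k%:R)
    (fun k => ln (pk k) / c k *
              (1 + theta * ln (ln (nV%:R : R)) / ln (pk k))).

Definition B_plus (theta alpha : R) : R :=
  Num.max B0 (gfun (lambda_theta theta alpha)).

Definition rich_with (theta alpha M : R) (Q : V -> V -> R) : Prop :=
  forall k : nat, k_theta theta alpha <= k%:R ->
  forall i j : V, in_scale gam k (d i j) ->
    1 / (M * powR (ln (nV%:R : R)) theta * gam ^+ k) <= Q i j.

Definition coherent_cost_geometry (A alpha phi lam : R) : Prop :=
  (forall x y, d x y = d y x) /\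
      (forall x y, 0 <= d x y) /\
      (forall x y, d x y = 0 <-> x = y) /\
      (* all pairs of distinct points lie in one of the scales 1..K *)
      (forall x y, x != y -> 1 < d x y <= gam ^+ KV) /\
      (forall (v : V) (k : nat), (1 <= k <= KV)%N ->
         alpha * gam ^+ k <= (Pkv k v)%:R /\ (Pkv k v)%:R <= A * gam ^+ k) /\
      (forall v t : V, v != t -> forall k : nat, in_scale gam k (d v t) ->
         phi * gam ^+ k <=
           (#|[set u | (d v u <= gam ^+ k) && (d u t <= lam * d v t)]|)%:R) /\
      (forall k : nat, (1 <= k <= KV)%N -> 0 < c k).

End CostGeometry.

(* Each entry of Q*(B) is 1/(1 + e) with e = exp(lambda(B) c_k).  Since g is
   decreasing, B >= g(lambda_theta) forces lambda(B) <= max(0, lambda_theta),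
   and lambda_theta <= (log p_k + theta log log n)/c_k for every scale
   k >= k_theta, so e <= 1 + p_k (log n)^theta.  By (H1), p_k <= A gamma^k,
   and as (log n)^theta gamma^k >= (log 2)^theta the constant
   M = A + 2/(log 2)^theta gives 1 + e <= M (log n)^theta gamma^k. *)

From HB Require Import structures.
From mathcomp Require Import all_boot all_order all_algebra.
From mathcomp Require Import classical_sets boolp reals sequences exp.
From mathcomp Require Import ring.
Set Implicit Arguments.
Unset Strict Implicit.
Import Order.TTheory GRing.Theory Num.Theory.
Local Open Scope ring_scope.

Lemma minover_le (R : realType) (P : nat -> Prop) (f : nat -> R) N k :
  (forall k, P k -> (k <= N)%N) -> P k -> minover P f <= f k.
Proof.
move=> PN P_k; apply: ge_inf; last by exists k.
exists (- \sum_(i < N.+1) `|f i|) => _ [j Pj <-].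
have jN : (j < N.+1)%N by rewrite ltnS PN.
rewrite (bigD1 (Ordinal jN)) //= lerNl.
apply: le_trans (_ : `|f j| <= _); first by rewrite -normrN ler_norm.
by rewrite lerDl sumr_ge0.
Qed.

Section Scales.
Variables (R : realType) (gam : R).
Hypothesis gam_gt1 : 1 < gam.

Let gam_gt0 : 0 < gam. Proof. exact: lt_trans gam_gt1. Qed.

Lemma in_scale_gt0 k r : in_scale gam k r -> 0 < r.
Proof. by case/andP=> + _; apply: le_lt_trans; rewrite exprn_ge0 ?ltW. Qed.

Lemma in_scale_range K k r : 1 < r <= gam ^+ K -> in_scale gam k r ->
  (1 <= k <= K)%N.
Proof.
case/andP=> r_gt1 r_le /andP[lo hi]; case: k lo hi => [|k] lo hi.
  by move: hi; rewrite expr0 leNgt r_gt1.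
rewrite /= leqNgt; apply/negP => K_lt.
have : gam ^+ K <= gam ^+ k by rewrite ler_eXn2l // -ltnS.
by move/le_lt_trans/(_ lo)/lt_le_trans/(_ r_le); rewrite ltxx.
Qed.

Lemma scale_of_in_scale k r : (0 < k)%N -> in_scale gam k r ->
  scale_of gam r = k.
Proof.
case: k => // k _ /andP[lo hi].
have r_gt0 : 0 < r by apply: le_lt_trans lo; rewrite exprn_ge0 ?ltW.
have lngam_gt0 : 0 < ln gam by rewrite ln_gt0.
rewrite /scale_of (@ceil_def _ _ k.+1%:Z) //; apply/andP; split.
  have -> : k.+1%:Z - 1 = k%:Z by rewrite -addn1 PoszD addrK.
  rewrite ltr_pdivlMr // mulrC mulrzr -pmulrn -lnXn // ltr_ln ?posrE ?exprn_gt0 //.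
rewrite ler_pdivrMr // mulrC mulrzr -pmulrn -lnXn // ler_ln ?posrE ?exprn_gt0 //.
Qed.

End Scales.

Lemma in_scale_dist (R : realType) (V : finType) (d : V -> V -> R) gam K k i j :
  1 < gam -> (forall x, d x x = 0) ->
  (forall x y, x != y -> 1 < d x y <= gam ^+ K) -> in_scale gam k (d i j) ->
  (1 <= k <= K)%N /\ (1 < #|V|)%N.
Proof.
move=> gam_gt1 d0 d_range ij_k.
have ij : i != j.
  by apply/eqP => ij; move: (in_scale_gt0 gam_gt1 ij_k); rewrite ij d0 ltxx.
split; first exact: (in_scale_range gam_gt1 (d_range i j ij) ij_k).
by have := max_card [set i; j]%SET; rewrite cards2 ij.
Qed.

Lemma ler_logistic_weight (R : realType) (a c x y : R) :
  0 <= a -> 0 <= c -> x <= y ->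
  a / (1 + expR (y * c)) <= a / (1 + expR (x * c)).
Proof.
move=> a_ge0 c_ge0 xy; apply: ler_wpM2l => //.
by rewrite lef_pV2 ?posrE ?addr_gt0 ?expR_gt0 // lerD2l ler_expR ler_wpM2r.
Qed.

Lemma ltr_logistic_weight (R : realType) (a c x y : R) :
  0 < a -> 0 < c -> x < y ->
  a / (1 + expR (y * c)) < a / (1 + expR (x * c)).
Proof.
move=> a_gt0 c_gt0 xy; rewrite ltr_pM2l //.
by rewrite ltf_pV2 ?posrE ?addr_gt0 ?expR_gt0 // ltrD2l ltr_expR ltr_pM2r.
Qed.

Lemma addr_le_rescale (R : realFieldType) (A m X e : R) :
  0 < m -> m <= X -> e <= 1 + A * X -> 1 + e <= (A + 2 / m) * X.
Proof.
move=> m_gt0 m_le_X e_le; rewrite mulrDl addrC.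
apply: le_trans (_ : _ <= A * X + 1 + 1) _; first by rewrite lerD2r addrC.
by rewrite -addrA lerD2l -mulr2n -mulrA ler_peMr // ler_pdivlMl // mulr1.
Qed.

(* If [ln p = 0], e.g. for the junk value [ln 0 = 0], the bound is
   [0 * (1 + t / 0) = 0]. *)
Lemma expR_le_of_log_bound (R : realType) (p c t l : R) : 0 <= p -> 0 < c ->
  l <= Num.max 0 (ln p / c * (1 + t / ln p)) -> expR (l * c) <= 1 + p * expR t.
Proof.
move=> p_ge0 c_gt0.
have nonpos_case : l <= 0 -> expR (l * c) <= 1 + p * expR t.
  move=> l_le0; apply: (@le_trans _ _ 1); last by rewrite lerDl mulr_ge0 ?expR_ge0.
  by rewrite -expR0 ler_expR pmulr_lle0.
rewrite le_max => /orP[/nonpos_case // | l_le].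
have [lnp0 | lnp_neq0] := eqVneq (ln p) 0.
  by apply: nonpos_case; move: l_le; rewrite lnp0 !mul0r.
have p_gt0 : 0 < p.
  by rewrite lt_neqAle p_ge0 andbT; apply: contra_neq lnp_neq0 => <-; rewrite ln0.
have : l * c <= ln p + t.
  have -> : ln p + t = ln p / c * (1 + t / ln p) * c.
    by field; rewrite lnp_neq0 gt_eqF.
  by rewrite ler_pM2r.
rewrite -ler_expR expRD lnK ?posrE // => /le_trans; apply.
by rewrite lerDr.
Qed.

Section ScaleWeights.
Variables (R : realType) (V : finType) (d : V -> V -> R) (gam : R) (c : nat -> R).
Hypothesis c_gt0 : forall k, (1 <= k <= KV V gam)%N -> 0 < c k.

Lemma pk_ge0 k : 0 <= pk d gam k.
Proof. by rewrite /pk /Pk !divr_ge0 ?sumr_ge0. Qed.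

Lemma pk_le (A : R) k : (0 < nV V)%N ->
  (forall v, (Pkv d gam k v)%:R <= A * gam ^+ k) -> pk d gam k <= A * gam ^+ k.
Proof.
move=> n_gt0 Pkv_le.
have n_pos : 0 < (nV V)%:R :> R by rewrite ltr0n.
have sum_le : \sum_(v : V) (Pkv d gam k v)%:R <= A * gam ^+ k * (nV V)%:R.
  apply: le_trans (ler_sum _ (fun v _ => Pkv_le v)) _.
  by rewrite sumr_const mulr_natr.
rewrite /pk /Pk ler_pdivrMr //; apply: le_trans sum_le.
by rewrite ler_pdivrMr // ler_peMr ?sumr_ge0 // ler1n.
Qed.

Let weight_ge0 k : (1 <= k < (KV V gam).+1)%N -> 0 <= c k * pk d gam k.
Proof. by move=> hk; rewrite mulr_ge0 ?pk_ge0 ?ltW ?c_gt0. Qed.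

Lemma gfun_ge0 x : 0 <= gfun d gam c x.
Proof.
rewrite /gfun big_nat_cond sumr_ge0 // => k /andP[hk _].
by rewrite divr_ge0 ?weight_ge0 ?addr_ge0 ?expR_ge0.
Qed.

Lemma gfun_lt x y : 0 < Bbar d gam c -> x < y -> gfun d gam c y < gfun d gam c x.
Proof.
move=> Bbar_gt0 xy; rewrite -subr_gt0 /gfun -sumrB big_seq.
have weight_ge : forall k, k \in index_iota 1 (KV V gam).+1 ->
    0 <= c k * pk d gam k / (1 + expR (x * c k)) -
         c k * pk d gam k / (1 + expR (y * c k)).
  move=> k; rewrite mem_index_iota => hk.
  by rewrite subr_ge0 ler_logistic_weight ?weight_ge0 ?(ltW xy) ?ltW ?c_gt0.
rewrite lt0r sumr_ge0 ?andbT ?psumr_neq0 //.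
have := lt0r_neq0 Bbar_gt0; rewrite /Bbar /gfun big_seq psumr_neq0; last first.
  move=> k; rewrite mem_index_iota => hk.
  by rewrite divr_ge0 ?weight_ge0 ?addr_ge0 ?expR_ge0.
case/hasP=> k k_in /andP[_ term_gt0]; apply/hasP; exists k; rewrite k_in //=.
move: k_in; rewrite mem_index_iota => hk.
rewrite subr_gt0 ltr_logistic_weight ?c_gt0 //.
by move: term_gt0; rewrite pmulr_lgt0 // invr_gt0 addr_gt0 ?expR_gt0.
Qed.

Lemma lambdaB_le_max B l : gfun d gam c l <= B -> lambdaB d gam c B <= Num.max 0 l.
Proof.
move=> gl_le; rewrite /lambdaB; case: ifPn => [_|]; first by rewrite le_max lexx.
rewrite -ltNge => B_lt.
set P := [set l : R | 0 <= l /\ gfun d gam c l = B]%classic.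
have [[l' Pl'] | noP] := pselect (exists l, P l); last first.
  by rewrite xgetPN ?le_max ?lexx // => l' Pl'; apply: noP; exists l'.
have [_ glB] := xgetPex 0 (ex_intro _ l' Pl').
rewrite le_max; apply/orP; right; rewrite leNgt; apply/negP => l_lt.
have Bbar_gt0 : 0 < Bbar d gam c by rewrite (le_lt_trans _ B_lt) // -glB gfun_ge0.
by have := gfun_lt Bbar_gt0 l_lt; rewrite glB ltNge gl_le.
Qed.

Lemma expR_lambdaB_le theta alpha B k : (1 < nV V)%N ->
  B_plus d gam c theta alpha <= B -> (1 <= k <= KV V gam)%N ->
  k_theta V gam theta alpha <= k%:R ->
  expR (lambdaB d gam c B * c k) <=
    1 + pk d gam k * powR (ln (nV V)%:R) theta.
Proof.
move=> n_gt1 B_ge hk k_ge.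
have -> : powR (ln (nV V)%:R) theta = expR (theta * ln (ln (nV V)%:R)).
  by rewrite /powR gt_eqF // ln_gt0 // ltr1n.
apply: expR_le_of_log_bound; rewrite ?pk_ge0 ?c_gt0 //.
apply: (le_trans (lambdaB_le_max (l := lambda_theta d gam c theta alpha) _)).
  by apply: le_trans B_ge; rewrite /B_plus le_max lexx orbT.
apply: le_max2 => //; apply: (@minover_le _ _ _ (KV V gam)) => //.
by move=> q [/andP[_ ->]].
Qed.

End ScaleWeights.

Theorem proposition2 (R : realType) (gam A alpha phi lam theta : R) :
  1 < gam -> 1 < A -> 0 < alpha -> 0 < phi -> 0 < lam < 1 -> 0 < theta ->
  exists M : R, 0 < M /\
    forall (V : finType) (d : V -> V -> R) (c : nat -> R),
      coherent_cost_geometry d gam c A alpha phi lam ->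
      forall B : R, B_plus d gam c theta alpha <= B ->
        rich_with d gam theta alpha M (Qstar d gam c B).
Proof.
move=> gam_gt1 A_gt1 _ _ _ theta_gt0.
have ln2_gt0 : 0 < ln (2 : R) by rewrite ln_gt0 // ltr1n.
set m := powR (ln (2 : R)) theta.
have m_gt0 : 0 < m by rewrite powR_gt0.
have M_gt0 : 0 < A + 2 / m by rewrite addr_gt0 ?divr_gt0 // (lt_trans ltr01).
exists (A + 2 / m); split => // V d c [_ [_ [d0 [d_range [H1 [_ c_gt0]]]]]].
move=> B B_ge k k_ge i j ij_k.
have [hk n_gt1] := in_scale_dist gam_gt1 (fun x => (d0 x x).2 erefl) d_range ij_k.
set X := powR (ln (nV V)%:R) theta * gam ^+ k.
have m_le_X : m <= X.
  apply: le_trans (ler_peMr (powR_ge0 _ _) (exprn_ege1 k (ltW gam_gt1))).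
  have L_ge : ln (2 : R) <= ln (nV V)%:R.
    by rewrite ler_ln ?posrE ?ltr0n ?ler_nat // (ltn_trans _ n_gt1).
  apply: (ge0_ler_powR (ltW theta_gt0)) => //; rewrite nnegrE ltW //.
  exact: lt_le_trans L_ge.
have e_le : expR (lambdaB d gam c B * c k) <= 1 + A * X.
  apply: le_trans (expR_lambdaB_le c_gt0 n_gt1 B_ge hk k_ge) _.
  rewrite lerD2l /X mulrCA mulrC ler_pM2l ?powR_gt0 ?ln_gt0 ?ltr1n //.
  by apply: pk_le => [|v]; [apply: ltnW | case: (H1 v k hk)].
rewrite /Qstar (scale_of_in_scale gam_gt1 _ ij_k) ?(leq_trans _ (andP hk).1) //.
rewrite !div1r -mulrA -/X lef_pV2 ?posrE ?addr_gt0 ?expR_gt0 //.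
  exact: addr_le_rescale.
by rewrite mulr_gt0 // (lt_le_trans m_gt0).
Qed.
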